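(* For every integer $r\ge 0$, the graph invariants $P_*^{(r)}$ and $\alpha_*^{(r)}$ are equivalent, i.e. for all graphs $G,H$: $P_*^{(r)}(G)=P_*^{(r)}(H)$ if and only if $\alpha_*^{(r)}(G)=\alpha_*^{(r)}(H)$.
   Context: Graphs are finite, simple and undirected; an $n$-vertex graph $G$ has $V(G)=\{1,\dots,n\}$ and adjacency matrix $A$. Let $\mu_1<\mu_2<\dots<\mu_m$ be the pairwise distinct eigenvalues of $A$, $E_i$ the eigenspace of $\mu_i$, and $P_i$ the matrix of the orthogonal projection of $\mathbb{R}^n$ onto $E_i$. For a vertex pair $(x,y)$ let $P_*(x,y)=(P_1(x,y),\dots,P_m(x,y))$. Let $\mathrm{e}_x$ be the standard basis vector. Let $\alpha_{i,x}=\|P_i\mathrm{e}_x\|$ (the cosine of the angle between $\mathrm{e}_x$ and $E_i$), and let $\alpha_{i,xy}$ be the cosine of the angle between $P_i\mathrm{e}_x$ and $P_i\mathrm{e}_y$, with $\alpha_{i,xy}=0$ if $P_i\mathrm{e}_x=0$ or $P_i\mathrm{e}_y=0$. Define $\alpha_i(x,x)=\alpha_{i,x}$, $\alpha_i(x,y)=\alpha_{i,xy}$ for $x\neq y$, and $\alpha_*(x,y)=(\alpha_1(x,y),\dots,\alpha_m(x,y))$. General framework: for a pair coloring $\chi$ (a map assigning to each graph $G$ and each $(x,y)\in V(G)^2$ a value $\chi(x,y)$, invariant under isomorphisms) define vertex colorings $\chi_0(x)=\chi(x,x)$, $\chi_{r+1}(x)=\big(\chi_r(x),\{\!\{(\chi(x,y),\chi_r(y))\}\!\}_{y\in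 V(G)}\big)$ for integers $r\ge0$, and $\chi_{1/2}(x)=\big(\chi(x,x),\{\!\{\chi(x,y)\}\!\}_{y\in V(G)}\big)$, where $\{\!\{\cdot\}\!\}$ denotes a multiset. The graph invariant $\chi^{(r)}$ is $\chi^{(r)}(G)=\{\!\{\chi_r(x)\}\!\}_{x\in V(G)}$. Two invariants $\mathcal I,\mathcal I'$ are equivalent if each determines the other, i.e. $\mathcal I(G)=\mathcal I(H)\iff \mathcal I'(G)=\mathcal I'(H)$ for all graphs $G,H$. *)

From HB Require Import structures.
From mathcomp Require Import all_boot all_order all_algebra.
From mathcomp Require Import finmap multiset.
From mathcomp Require Import polyrcf.
Set Implicit Arguments. Unset Strict Implicit. Unset Printing Implicit Defensive.
Import Order.TTheory GRing.Theory Num.Theory.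

Record graph (n : nat) := Graph {
  adj : rel 'I_n ;
  adj_sym : symmetric adj ;
  adj_irr : irreflexive adj }.

Definition pcol (C : choiceType) := forall n, graph n -> 'I_n -> 'I_n -> C.

Fixpoint colT (C : choiceType) (r : nat) : choiceType :=
  match r with
  | 0 => C
  | r'.+1 => (colT C r' * multiset (C * colT C r'))%type
  end.

Fixpoint chi_col (C : choiceType) (chi : pcol C) (r : nat) (n : nat)
    (G : graph n) (x : 'I_n) : colT C r :=
  match r return colT C r with
  | 0 => chi n G x x
  | r'.+1 => (chi_col chi r' G x,
              seq_mset [seq (chi n G x y, chi_col chi r' G y) | y <- enum 'I_n])
  end.

Definition chi_inv (C : choiceType) (chi : pcol C) (r : nat) (n : nat)
    (G : graph n) : multiset (colT C r) :=
  seq_mset [seq chi_col chi r G x | x <- enum 'I_n].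

Local Open Scope ring_scope.

Section Spectral.
Variable R : rcfType.

Definition adjmx n (G : graph n) : 'M[R]_n := \matrix_(i, j) (adj G i j)%:R.

(* mu_1 < mu_2 < ... < mu_m : the distinct eigenvalues of A (sorted). *)
Definition eigs n (G : graph n) : seq R := rootsR (char_poly (adjmx G)).

(* Matrix of the orthogonal projection of R^n onto the row space of U:
   with B a basis (rows) of that space, P = B^T (B B^T)^-1 B. *)
Definition orth_proj n (U : 'M[R]_n) : 'M[R]_n :=
  let B := row_base U in B^T *m invmx (B *m B^T) *m B.

Definition eproj n (G : graph n) (mu : R) : 'M[R]_n :=
  orth_proj (eigenspace (adjmx G) mu).

Definition vdot n (u v : 'rV[R]_n) : R := \sum_j u 0 j * v 0 j.
Definition vnorm n (u : 'rV[R]_n) : R := Num.sqrt (vdot u u).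

Definition vcos n (u v : 'rV[R]_n) : R :=
  if (u == 0) || (v == 0) then 0 else vdot u v / (vnorm u * vnorm v).

Definition proj_e n (P : 'M[R]_n) (x : 'I_n) : 'rV[R]_n := delta_mx 0 x *m P.

Definition alpha n (P : 'M[R]_n) (x y : 'I_n) : R :=
  if x == y then vnorm (proj_e P x) else vcos (proj_e P x) (proj_e P y).

Definition Pstar : pcol (seq R : choiceType) :=
  fun n G x y => [seq eproj G mu x y | mu <- eigs G].

Definition astar : pcol (seq R : choiceType) :=
  fun n G x y => [seq alpha (eproj G mu) x y | mu <- eigs G].

End Spectral.

From HB Require Import structures.
From mathcomp Require Import all_boot all_order all_algebra.
From mathcomp Require Import finmap multiset.
From mathcomp Require Import polyrcf complex.
From mathcomp Require Import ring.
Set Implicit Arguments. Unset Strict Implicit. Unset Printing Implicit Defensive.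
Import Order.TTheory GRing.Theory Num.Theory.
Local Open Scope ring_scope.

(* The eigenprojections P_i of a graph are symmetric idempotents summing to
   the identity.  Hence alpha_i(x,x) = sqrt P_i(x,x), and for x <> y
   alpha_i(x,y) = P_i(x,y) / (sqrt P_i(x,x) sqrt P_i(y,y)) and
   P_i(x,y) = alpha_i(x,y) alpha_i(x,x) alpha_i(y,y); moreover x = y can be
   read off either colour, as P_*(x,y) = P_*(x,x) (resp. alpha_*(x,y) =
   alpha_*(x,x)) forces x = y.  So each of the two pair colours is a fixed
   function of the other at (x,y), (x,x) and (y,y).  Such a dependence
   survives refinement: chi_r(x) contains chi(x,x), and the multiset entry
   for y contains chi_r(y), hence chi(y,y).  The resolution of the identity
   is the spectral theorem for the symmetric adjacency matrix: its
   eigenvalues are real and its minimal polynomial is squarefree. *)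

Section Refinement.
Variables C1 C2 : choiceType.

Definition determines (chi1 : pcol C1) (chi2 : pcol C2) :=
  exists h : C1 -> C1 -> C1 -> C2, forall n (G : graph n) x y,
    chi2 n G x y = h (chi1 n G x y) (chi1 n G x x) (chi1 n G y y).

Fixpoint col_diag (C : choiceType) (r : nat) : colT C r -> C :=
  match r return colT C r -> C with
  | 0 => id
  | r'.+1 => fun c => @col_diag C r' c.1
  end.

Fixpoint map_col (h : C1 -> C1 -> C1 -> C2) (r : nat) : colT C1 r -> colT C2 r :=
  match r return colT C1 r -> colT C2 r with
  | 0 => fun c => h c c c
  | r'.+1 => fun c =>
      (map_col h c.1,
       seq_mset [seq (h pc.1 (col_diag c.1) (col_diag pc.2), map_col h pc.2)
                | pc <- enum_mset (c.2 : multiset _)])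
  end.

Lemma seq_mset_map_enum (T U : choiceType) (g : T -> U) (s : seq T) :
  seq_mset [seq g x | x <- enum_mset (seq_mset s)] = seq_mset [seq g x | x <- s].
Proof. by apply/eq_seq_msetP; apply: perm_map; apply: perm_eq_seq_mset. Qed.

Lemma col_diag_chi_col (C : choiceType) (chi : pcol C) r n (G : graph n) x :
  col_diag (chi_col chi r G x) = chi n G x x.
Proof. by elim: r => //= r ->. Qed.

Lemma chi_col_map (chi1 : pcol C1) (chi2 : pcol C2) h
    (Hh : forall n (G : graph n) x y,
      chi2 n G x y = h (chi1 n G x y) (chi1 n G x x) (chi1 n G y y))
    r n (G : graph n) x :
  chi_col chi2 r G x = map_col h (chi_col chi1 r G x).
Proof.
elim: r x => [|r IH] x /=; first by rewrite Hh.
rewrite IH seq_mset_map_enum -[in RHS]map_comp; congr (_, seq_mset _).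
by apply: eq_map => y /=; rewrite Hh !col_diag_chi_col IH.
Qed.

Lemma chi_inv_determined (chi1 : pcol C1) (chi2 : pcol C2) r n m
    (G : graph n) (H : graph m) :
  determines chi1 chi2 ->
  chi_inv chi1 r G = chi_inv chi1 r H -> chi_inv chi2 r G = chi_inv chi2 r H.
Proof.
move=> [h Hh]; have inv_map k (K : graph k) :
    chi_inv chi2 r K = seq_mset [seq map_col h c | c <- enum_mset (chi_inv chi1 r K)].
  rewrite /chi_inv seq_mset_map_enum -map_comp.
  by congr seq_mset; apply: eq_map => x /=; rewrite (chi_col_map Hh).
by rewrite !inv_map => ->.
Qed.

End Refinement.

Section SymmetricIdempotent.
Variable R : rcfType.

Definition sym_idem n (P : 'M[R]_n) := P^T = P /\ P *m P = P.

Lemma vdot_self_ge0 n (u : 'rV[R]_n) : 0 <= vdot u u.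
Proof. by rewrite /vdot sumr_ge0 // => j _; rewrite -expr2 sqr_ge0. Qed.

Lemma vdot_self_eq0 n (u : 'rV[R]_n) : (vdot u u == 0) = (u == 0).
Proof.
apply/eqP/eqP => [u0|->]; last by rewrite /vdot big1 // => j _; rewrite mxE mulr0.
apply/rowP => j; rewrite mxE.
have sq_ge0 (i : 'I_n) : predT i -> 0 <= u 0 i * u 0 i by rewrite -expr2 sqr_ge0.
have /eqP := psumr_eq0P sq_ge0 u0 (i := j) isT.
by rewrite mulf_eq0 orbb => /eqP.
Qed.

Lemma gram_eq0 p q (W : 'M[R]_(p, q)) : W *m W^T = 0 -> W = 0.
Proof.
move=> WW0; apply/row_matrixP => i; apply/eqP; rewrite row0 -vdot_self_eq0.
have := congr1 (fun M : 'M_p => M i i) WW0; rewrite !mxE => <-.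
by apply/eqP/eq_bigr => j _; rewrite !mxE.
Qed.

Variables (n : nat) (P : 'M[R]_n).
Hypothesis sP : sym_idem P.

Lemma sym_idem_sym x y : P x y = P y x.
Proof. by rewrite -{1}sP.1 mxE. Qed.

Lemma vdot_proj_e x y : vdot (proj_e P x) (proj_e P y) = P x y.
Proof.
rewrite /vdot /proj_e -!rowE -{3}sP.2 mxE.
by apply: eq_bigr => j _; rewrite !mxE (sym_idem_sym j y).
Qed.

Lemma sym_idem_diag_ge0 x : 0 <= P x x.
Proof. by rewrite -vdot_proj_e vdot_self_ge0. Qed.

Lemma proj_e_eq0 x : (proj_e P x == 0) = (P x x == 0).
Proof. by rewrite -vdot_self_eq0 vdot_proj_e. Qed.

Lemma sym_idem_row0 x y : P x x = 0 -> P x y = 0.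
Proof.
move/eqP; rewrite -proj_e_eq0 => /eqP Px0.
by rewrite -vdot_proj_e Px0 /vdot big1 // => j _; rewrite mxE mul0r.
Qed.

Lemma sqrt_diag_eq0 x : (Num.sqrt (P x x) == 0) = (P x x == 0).
Proof. by rewrite sqrtr_eq0 eq_le sym_idem_diag_ge0 andbT. Qed.

Lemma alpha_diag x : alpha P x x = Num.sqrt (P x x).
Proof. by rewrite /alpha eqxx /vnorm vdot_proj_e. Qed.

Lemma alpha_offdiag x y : x != y ->
  alpha P x y = if (P x x == 0) || (P y y == 0) then 0
                else P x y / (Num.sqrt (P x x) * Num.sqrt (P y y)).
Proof.
by move=> /negbTE xy; rewrite /alpha xy /vcos /vnorm !vdot_proj_e !proj_e_eq0.
Qed.

Lemma sym_idem_factor x y : x != y ->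
  P x y = alpha P x y * Num.sqrt (P x x) * Num.sqrt (P y y).
Proof.
move=> xy; rewrite alpha_offdiag //; case: ifP => [/orP[]/eqP P0|/norP[x0 y0]].
- by rewrite sym_idem_row0 // !mul0r.
- by rewrite sym_idem_sym sym_idem_row0 // !mul0r.
by rewrite -mulrA divfK // mulf_neq0 ?sqrt_diag_eq0.
Qed.

Lemma alpha_offdiag_eq_diag x y : x != y -> alpha P x y = alpha P x x ->
  0 <= P x y /\ (P x y = 0 -> P x x = 0).
Proof.
move=> xy axy; have Pxy : P x y = P x x * Num.sqrt (P y y).
  by rewrite sym_idem_factor // axy alpha_diag -expr2 sqr_sqrtr ?sym_idem_diag_ge0.
split=> [|/eqP]; first by rewrite Pxy mulr_ge0 ?sym_idem_diag_ge0 ?sqrtr_ge0.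
rewrite Pxy mulf_eq0 sqrt_diag_eq0 => /orP[/eqP //|y0].
move: axy; rewrite alpha_offdiag // y0 orbT alpha_diag => /esym/eqP.
by rewrite sqrt_diag_eq0 => /eqP.
Qed.

End SymmetricIdempotent.

Section ResolutionOfIdentity.
Variables (R : rcfType) (n : nat) (Ps : seq 'M[R]_n).

Definition resolution_of_1 :=
  (forall P, P \in Ps -> sym_idem P) /\ \sum_(P <- Ps) P = 1%:M.

Hypothesis rPs : resolution_of_1.

Let sum_entry x y : \sum_(P <- Ps) P x y = (x == y)%:R.
Proof. by rewrite -summxE rPs.2 !mxE. Qed.

Lemma Pcol_offdiag_neq x y : x != y ->
  [seq P x y | P : 'M_n <- Ps] != [seq P x x | P : 'M_n <- Ps].
Proof.
move=> xy; apply: contraTneq isT => Exy.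
have := congr1 (fun s => \sum_(a <- s) a) Exy.
by rewrite /= !big_map !sum_entry eqxx (negbTE xy) => /eqP; rewrite eq_sym oner_eq0.
Qed.

Lemma acol_offdiag_neq x y : x != y ->
  [seq alpha P x y | P : 'M_n <- Ps] != [seq alpha P x x | P : 'M_n <- Ps].
Proof.
move=> xy; apply: contraTneq isT => /eq_in_map Exy.
have Pxy P (PP : P \in Ps) := alpha_offdiag_eq_diag (rPs.1 P PP) xy (Exy P PP).
have Pxy0 P : P \in Ps -> P x y = 0.
  have : \sum_(P <- Ps | P \in Ps) P x y = 0 by rewrite -big_seq sum_entry (negbTE xy).
  move/eqP; rewrite psumr_eq0 => [/allP all0 PP|Q /Pxy[] //].
  by move/implyP: (all0 P PP) => /(_ PP)/eqP.
have := sum_entry x x; rewrite eqxx big_seq big1 => [/eqP|P PP].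
  by rewrite eq_sym oner_eq0.
by apply: (Pxy P PP).2; apply: Pxy0.
Qed.

End ResolutionOfIdentity.

(* In both functions the first test recognises the diagonal pairs x = y,
   by Pcol_offdiag_neq and acol_offdiag_neq respectively. *)
Definition alpha_of_P (R : rcfType) (p px py : seq R) : seq R :=
  if p == px then map Num.sqrt px else
  [seq if (t.1.2 == 0) || (t.2 == 0) then 0
       else t.1.1 / (Num.sqrt t.1.2 * Num.sqrt t.2) | t <- zip (zip p px) py].

Definition P_of_alpha (R : rcfType) (a ax ay : seq R) : seq R :=
  if a == ax then [seq u ^+ 2 | u <- ax] else
  [seq t.1.1 * t.1.2 * t.2 | t <- zip (zip a ax) ay].

Lemma zip_map3 (T U : Type) (f g k : T -> U) (s : seq T) :
  zip (zip (map f s) (map g s)) (map k s) = [seq ((f z, g z), k z) | z <- s].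
Proof. by elim: s => //= z s ->. Qed.

Section Conversion.
Variables (R : rcfType) (n : nat) (Ps : seq 'M[R]_n).
Hypothesis rPs : resolution_of_1 Ps.

Lemma acol_of_Pcol x y :
  [seq alpha P x y | P : 'M_n <- Ps] =
  alpha_of_P [seq P x y | P : 'M_n <- Ps] [seq P x x | P : 'M_n <- Ps]
             [seq P y y | P : 'M_n <- Ps].
Proof.
rewrite /alpha_of_P; have [<-|xy] := eqVneq x y.
  rewrite eqxx -map_comp; apply/eq_in_map => P /rPs.1 sP /=.
  exact: alpha_diag.
rewrite (negbTE (Pcol_offdiag_neq rPs xy)) zip_map3 -map_comp.
by apply/eq_in_map => P /rPs.1 sP /=; rewrite alpha_offdiag.
Qed.

Lemma Pcol_of_acol x y :
  [seq P x y | P : 'M_n <- Ps] =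
  P_of_alpha [seq alpha P x y | P : 'M_n <- Ps] [seq alpha P x x | P : 'M_n <- Ps]
             [seq alpha P y y | P : 'M_n <- Ps].
Proof.
rewrite /P_of_alpha; have [<-|xy] := eqVneq x y.
  rewrite eqxx -map_comp; apply/eq_in_map => P /rPs.1 sP /=.
  by rewrite alpha_diag // sqr_sqrtr // sym_idem_diag_ge0.
rewrite (negbTE (acol_offdiag_neq rPs xy)) zip_map3 -map_comp.
by apply/eq_in_map => P /rPs.1 sP /=; rewrite sym_idem_factor // !alpha_diag.
Qed.

End Conversion.

Section GramProjection.
Variable R : rcfType.

Definition gram_proj k n (B : 'M[R]_(k, n)) : 'M[R]_n := B^T *m invmx (B *m B^T) *m B.

Lemma gram_unit k n (B : 'M[R]_(k, n)) : row_free B -> B *m B^T \in unitmx.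
Proof.
move=> fB; rewrite -row_free_unit -kermx_eq0; apply/eqP.
set K := kermx _; have KB0 : (K *m B) *m (K *m B)^T = 0.
  by rewrite trmx_mul mulmxA -(mulmxA K) mulmx_ker mul0mx.
by apply/eqP; rewrite -(mulmx_free_eq0 _ fB); apply/eqP/gram_eq0.
Qed.

Lemma gram_proj_sym_idem k n (B : 'M[R]_(k, n)) : row_free B ->
  sym_idem (gram_proj B).
Proof.
move=> /gram_unit uB; split.
  by rewrite !trmx_mul trmxK trmx_inv trmx_mul trmxK mulmxA.
rewrite /gram_proj -!mulmxA; congr (_ *m _).
by rewrite (mulmxA B) mulmxA mulVmx // mul1mx.
Qed.

Lemma gram_proj_id k n (B : 'M[R]_(k, n)) m (v : 'M[R]_(m, n)) : row_free B ->
  (v <= B)%MS -> v *m gram_proj B = v.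
Proof.
move=> /gram_unit uB /submxP[D ->].
by rewrite !mulmxA -(mulmxA D) -(mulmxA D) mulmxV // mulmx1.
Qed.

Lemma gram_proj_orth k n (B : 'M[R]_(k, n)) m (v : 'M[R]_(m, n)) :
  v *m B^T = 0 -> v *m gram_proj B = 0.
Proof. by move=> vB0; rewrite !mulmxA vB0 !mul0mx. Qed.

Lemma orth_proj_sym_idem n (U : 'M[R]_n) : sym_idem (orth_proj U).
Proof. exact: gram_proj_sym_idem (row_base_free U). Qed.

End GramProjection.

Section SymmetricSpectrum.
Variable R : rcfType.

Lemma eigenspace_orth n (A : 'M[R]_n) a b p q (U : 'M_(p, n)) (W : 'M_(q, n)) :
  A^T = A -> (U <= eigenspace A a)%MS -> (W <= eigenspace A b)%MS -> a != b ->
  U *m W^T = 0.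
Proof.
move=> sA /eigenspaceP UA /eigenspaceP WA ab.
have e1 : U *m A *m W^T = a *: (U *m W^T) by rewrite UA scalemxAl.
have e2 : U *m A *m W^T = b *: (U *m W^T).
  by rewrite -mulmxA -sA -trmx_mul WA linearZ /= scalemxAr.
have /eqP : (a - b) *: (U *m W^T) = 0 by rewrite scalerBl -e1 -e2 subrr.
by rewrite scalemx_eq0 subr_eq0 (negbTE ab) => /eqP.
Qed.

Lemma sum_orth_proj_eigenspace n (A : 'M[R]_n) (s : seq R) : A^T = A -> uniq s ->
  (1%:M <= \sum_(i < size s) eigenspace A s`_i)%MS ->
  \sum_(mu <- s) orth_proj (eigenspace A mu) = 1%:M.
Proof.
move=> sA us span; rewrite (big_nth 0) big_mkord.
set Q := fun i : 'I_(size s) => orth_proj (eigenspace A s`_i).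
suff Qv (v : 'rV[R]_n) : v *m \sum_(i < size s) Q i = v.
  by apply/row_matrixP => i; rewrite !rowE mulmx1 Qv.
have /sub_sumsmxP[u vE] := submx_trans (submx1 v) span.
have Quv i j : (u i *m eigenspace A s`_i) *m Q j =
    if i == j then u i *m eigenspace A s`_i else 0.
  rewrite /Q /orth_proj; case: eqP => [<-|/eqP ij].
    by apply: gram_proj_id; rewrite ?row_base_free ?eq_row_base ?submxMl.
  apply/gram_proj_orth/(eigenspace_orth (a := s`_i) (b := s`_j) sA).
  - exact: submxMl.
  - by rewrite eq_row_base.
  by rewrite nth_uniq // => /eqP/val_inj/eqP; rewrite (negbTE ij).
rewrite mulmx_sumr {2}vE; apply: eq_bigr => j _.
rewrite vE mulmx_suml (bigD1 j) //= Quv eqxx big1 ?addr0 // => i ij.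
by rewrite Quv (negbTE ij).
Qed.

Lemma sym_eigenvalue_real n (A : 'M[R]_n) (z : R[i]) : A^T = A ->
  eigenvalue (map_mx (real_complex R) A) z -> exists k : R, z = real_complex R k.
Proof.
move=> sA /eigenvalueP[v vA v0]; set A' := map_mx _ A in vA.
have cA : map_mx Num.conj A' = A'.
  by apply/matrixP => i j; rewrite !mxE conj_Creal // complex_real.
have sA' : A'^T = A' by rewrite /A' map_trmx sA.
set w := map_mx Num.conj v.
have wA : w *m A' = z^* *: w by rewrite -{1}cA /w -map_mxM vA map_mxZ.
have e1 : v *m A' *m w^T = z *: (v *m w^T) by rewrite vA scalemxAl.
have e2 : v *m A' *m w^T = z^* *: (v *m w^T).
  by rewrite -mulmxA -sA' -trmx_mul wA linearZ /= scalemxAr.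
have vw : v *m w^T != 0.
  apply: contra v0 => /eqP/matrixP/(_ 0 0); rewrite !mxE => vw0.
  apply/eqP/rowP => j; rewrite mxE.
  have vv0 : \sum_k v 0 k * (v 0 k)^* = 0.
    by rewrite -[RHS]vw0; apply: eq_bigr => k _; rewrite !mxE.
  have /eqP := @psumr_eq0P _ _ predT _ (fun k _ => mul_conjC_ge0 (v 0 k)) vv0 j isT.
  by rewrite mul_conjC_eq0 => /eqP.
have /eqP : (z - z^*) *: (v *m w^T) = 0 by rewrite scalerBl -e1 -e2 subrr.
rewrite scalemx_eq0 (negbTE vw) orbF subr_eq0 eq_sym -CrealE.
by move/complex_realP.
Qed.

Lemma horner_mx_sym n (A : 'M[R]_n.+1) p : A^T = A -> (horner_mx A p)^T = horner_mx A p.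
Proof.
move=> sA; elim/poly_ind: p => [|p c IH]; first by rewrite rmorph0 trmx0.
rewrite rmorphD rmorphM /= horner_mx_X horner_mx_C raddfD /= tr_scalar_mx.
congr (_ + _); rewrite [LHS]trmx_mul IH sA.
exact: (comm_mx_horner p (erefl (A *m A))).
Qed.

(* A symmetric N with N^2 = 0 vanishes, since N N^T = 0. *)
Lemma horner_mx_sym_sqr_factor n (A : 'M[R]_n.+1) a g : A^T = A ->
  horner_mx A (('X - a%:P) ^+ 2 * g) = 0 -> horner_mx A (('X - a%:P) * g) = 0.
Proof.
move=> sA Ag0; set N := horner_mx A _.
have NN : N * N = 0 by rewrite /N -rmorphM /= mulrACA -expr2 mulrA rmorphM /= Ag0 mul0r.
by apply: gram_eq0; rewrite horner_mx_sym.
Qed.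

Lemma horner_mx_sym_undup n (A : 'M[R]_n.+1) (t : seq R) q : A^T = A ->
  horner_mx A (q * \prod_(x <- t) ('X - x%:P)) = 0 ->
  horner_mx A (q * \prod_(x <- undup t) ('X - x%:P)) = 0.
Proof.
move=> sA; elim: t q => [//|a t IH] q /=; case: ifP => at_t; last first.
  by rewrite !big_cons !mulrA => /IH.
rewrite big_cons => Ag0; apply: IH; move: Ag0.
rewrite (perm_big _ (perm_to_rem at_t)) big_cons /=.
set F := \prod_(_ <- _) _; set X := 'X - a%:P => Ag0.
have -> : q * (X * F) = X * (q * F) by ring.
by apply: (horner_mx_sym_sqr_factor sA); rewrite -Ag0 /X; congr horner_mx; ring.
Qed.

Lemma sym_mxminpoly_split n (A : 'M[R]_n.+1) : A^T = A ->
  exists rs : seq R, mxminpoly A = \prod_(x <- rs) ('X - x%:P).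
Proof.
move=> sA; have [zs Ezs] := closed_field_poly_normal (map_poly (real_complex R) (mxminpoly A)).
rewrite (monicP _) ?map_monic ?mxminpoly_monic // scale1r in Ezs.
exists (map (@complex.Re R) zs); apply: (map_poly_inj (real_complex R)).
rewrite Ezs rmorph_prod big_map; apply: eq_big_seq => z zs_z.
have [|k ->] := sym_eigenvalue_real sA (z := z).
  by rewrite eigenvalue_root_min mxminpoly_map Ezs root_prod_XsubC.
by rewrite /= map_polyXsubC.
Qed.

Lemma eigenvalue_rootsR_char n (A : 'M[R]_n) e :
  eigenvalue A e -> e \in rootsR (char_poly A).
Proof.
move=> eAe; rewrite -(roots_on_rootsR (monic_neq0 (char_poly_monic A))).
by rewrite -eigenvalue_root_char eAe andbT in_itv.
Qed.

Lemma sym_eigenspaces_span n (A : 'M[R]_n) (s : seq R) : A^T = A ->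
  (forall e, eigenvalue A e -> e \in s) ->
  (1%:M <= \sum_(i < size s) eigenspace A s`_i)%MS.
Proof.
case: n A => [|n] A sA s_eig; first by rewrite thinmx0 sub0mx.
have [rs Ers] := sym_mxminpoly_split sA.
have : horner_mx A (1 * \prod_(x <- rs) ('X - x%:P)) = 0.
  by rewrite mul1r -Ers mx_root_minpoly.
move/(horner_mx_sym_undup sA); rewrite mul1r => /mxminpoly_min min_undup.
have /(diagonalizablePeigen (f := A)) [es _ <-] :=
  (diagonalizableP A).2 (ex_intro2 _ _ (undup rs) (undup_uniq rs) min_undup).
rewrite (big_nth 0) big_mkord; apply/sumsmx_subP => i _; set e := es`_i.
have [->|nz_e] := eqVneq (eigenspace A e) 0; first exact: sub0mx.
have s_e : e \in s by apply: s_eig; rewrite /eigenvalue nz_e.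
have e_idx : (index e s < size s)%N by rewrite index_mem.
by apply: (sumsmx_sup (Ordinal e_idx)) => //=; rewrite nth_index.
Qed.

End SymmetricSpectrum.

Lemma adjmx_sym (R : rcfType) n (G : graph n) : (adjmx R G)^T = adjmx R G.
Proof. by apply/matrixP => i j; rewrite !mxE adj_sym. Qed.

Lemma eproj_resolution_of_1 (R : rcfType) n (G : graph n) :
  resolution_of_1 [seq eproj G mu | mu <- eigs R G].
Proof.
split; first by move=> P /mapP[mu _ ->]; apply: orth_proj_sym_idem.
rewrite big_map sum_orth_proj_eigenspace ?adjmx_sym ?uniq_roots //.
exact/sym_eigenspaces_span/eigenvalue_rootsR_char/adjmx_sym.
Qed.

Lemma Pstar_determines_astar (R : rcfType) : determines (Pstar R) (astar R).
Proof.
exists (@alpha_of_P R) => n G x y; rewrite /Pstar /astar.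
by have := acol_of_Pcol (eproj_resolution_of_1 R G) x y; rewrite -!map_comp.
Qed.

Lemma astar_determines_Pstar (R : rcfType) : determines (astar R) (Pstar R).
Proof.
exists (@P_of_alpha R) => n G x y; rewrite /Pstar /astar.
by have := Pcol_of_acol (eproj_resolution_of_1 R G) x y; rewrite -!map_comp.
Qed.

Theorem lemma3p1 (R : rcfType) (r : nat) (n m : nat) (G : graph n) (H : graph m) :
  chi_inv (Pstar R) r G = chi_inv (Pstar R) r H <->
  chi_inv (astar R) r G = chi_inv (astar R) r H.
Proof.
split; apply: chi_inv_determined.
- exact: Pstar_determines_astar.
- exact: astar_determines_Pstar.
Qed.
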